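(* Let $k$ be a commutative ring and $A$ a commutative $k$-algebra. The injective $A$-linear map $$\theta_{A/k}=\bigoplus_{n\ge0}\theta_n:\operatorname{gr}\operatorname{Diff}_{A/k}\to(\operatorname{Sym}\Omega_{A/k})^*_{gr}$$ is a homomorphism of graded $A$-algebras, where $(\operatorname{Sym}\Omega_{A/k})^*_{gr}$ carries the shuffle product.
   Context: $\operatorname{Diff}^{(0)}_{A/k}$ = multiplications by elements of $A$; $\operatorname{Diff}^{(i+1)}_{A/k}=\{\varphi\in\operatorname{End}_k(A):[\varphi,a]\in\operatorname{Diff}^{(i)}_{A/k}\ \forall a\in A\}$, $[\varphi,a]=\varphi\circ a-a\circ\varphi$; $\operatorname{Diff}_{A/k}=\bigcup_i\operatorname{Diff}^{(i)}_{A/k}$ is a filtered ring whose associated graded ring $\operatorname{gr}\operatorname{Diff}_{A/k}=\bigoplus_n\operatorname{Diff}^{(n)}/\operatorname{Diff}^{(n-1)}$ ($\operatorname{Diff}^{(-1)}=0$) is a commutative graded $A$-algebra; $\sigma_n(P)$ denotes the class of $P\in\operatorname{Diff}^{(n)}$. $\Omega_{A/k}$ is the module of Kähler differentials, $d:A\to\Omega_{A/k}$. $(\operatorname{Sym}\Omega)^*_{gr}=\bigoplus_n\operatorname{Hom}_A(\operatorname{Sym}^n\Omega,A)$ with shuffle product $(u\star v)(\prod_{l=1}^{i+j}\omega_l)=\sum_{L\subset[i+j],\sharp L=i}u(\omega_L)v(\omega_{[i+j]\setminus L})$, $\omega_L=\prod_{l\in L}\omega_l$. For $P\in\operatorname{Diff}^{(n)}$,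 $\theta_n(\sigma_n(P))$ is the $A$-linear form on $\operatorname{Sym}^n\Omega_{A/k}$ determined by $dx_1\cdots dx_n\mapsto\sum_{L\subset[n]}(-1)^{\sharp L}x_LP(x_{[n]\setminus L})$ ($x_L=\prod_{i\in L}x_i$); this is well defined, depends only on $\sigma_n(P)$, and $\theta_n$ is injective. *)

From HB Require Import structures.
From mathcomp Require Import all_boot all_order all_algebra.
Set Implicit Arguments. Unset Strict Implicit. Unset Printing Implicit Defensive.
Import GRing.Theory.
Local Open Scope ring_scope.

Section DiffOps.
Variables (k : comPzRingType) (A : comAlgType k).

Definition klin (P : A -> A) : Prop :=
  forall (c : k) (x y : A), P (c *: x + y) = c *: P x + P y.

Fixpoint isDiff (n : nat) (P : A -> A) : Prop :=
  klin P /\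
  match n with
  | 0 => exists a : A, forall x, P x = a * x
  | n'.+1 => forall a : A, isDiff n' (fun x => P (a * x) - a * P x)
  end.

(* An A-linear form u on Sym^n Omega_{A/k} is represented by its values on
   the monomials dx_1 ... dx_n, i.e. by u [:: x_1; ...; x_n]
   (these monomials generate Sym^n Omega as an A-module).
   theta_form P s = theta_n(sigma_n(P))(dx_1 ... dx_n) for s = [:: x_1; ...; x_n]:
     sum_{L subset [n]} (-1)^{#L} x_L P(x_{[n]\L}). *)
Definition theta_form (P : A -> A) (s : seq A) : A :=
  \sum_(L : {set 'I_(size s)})
     (-1) ^+ #|L| * (\prod_(l in L) s`_l) * P (\prod_(l in ~: L) s`_l).

Definition shuffle (i : nat) (u v : seq A -> A) (s : seq A) : A :=
  \sum_(L : {set 'I_(size s)} | #|L| == i)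
     u [seq s`_(nat_of_ord l) | l <- enum L] * v [seq s`_(nat_of_ord l) | l <- enum (~: L)].

End DiffOps.

From HB Require Import structures.
From mathcomp Require Import all_boot all_order all_algebra.
From mathcomp Require Import ring.
Import GRing.Theory.
Local Open Scope ring_scope.
Set Implicit Arguments. Unset Strict Implicit. Unset Printing Implicit Defensive.

(* Write [P, x] for y |-> P (x y) - x P y.  Splitting the subsets L of
   {1, ..., n} according to whether 1 lies in L shows that
   theta(P)(dx_1 ... dx_n) = theta([P, x_1])(dx_2 ... dx_n), i.e. theta(P) is
   the iterated bracket [...[P, x_1], ..., x_n] evaluated at 1; the same
   splitting gives the recursion of the shuffle product in its first variable.
   Multiplicativity then follows by induction on n from the Leibniz rule
   [P o Q, x] = [P, x] o Q + P o [Q, x] and from [P, x] = 0 when P has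
   order 0. *)

Section SetMasks.

Definition mask_of_set n (L : {set 'I_n}) : seq bool := [seq i \in L | i <- enum 'I_n].

Lemma mask_of_setC n (L : {set 'I_n}) : mask_of_set (~: L) = map negb (mask_of_set L).
Proof. by rewrite /mask_of_set -map_comp; apply: eq_map => i /=; rewrite in_setC. Qed.

Lemma card_mask_of_set n (L : {set 'I_n}) : #|L| = count id (mask_of_set L).
Proof. by rewrite cardE /enum_mem size_filter /mask_of_set count_map enumT. Qed.

Lemma map_nth_enum_set (T : Type) (x0 : T) (s : seq T) (L : {set 'I_(size s)}) :
  [seq nth x0 s i | i : 'I_(size s) <- enum L] = mask (mask_of_set L) s.
Proof.
rewrite {1}/enum_mem -enumT filter_mask map_mask; congr mask.
by rewrite -[RHS](mkseq_nth x0 s) /mkseq -val_enum_ord -map_comp.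
Qed.

Definition cons_set n (b : bool) (L : {set 'I_n}) : {set 'I_n.+1} :=
  [set i | if unlift ord0 i is Some j then j \in L else b].

Lemma mask_of_cons_set n b (L : {set 'I_n}) :
  mask_of_set (cons_set b L) = b :: mask_of_set L.
Proof.
rewrite /mask_of_set enum_ordSl /= inE unlift_none -map_comp; congr cons.
by apply: eq_map => i /=; rewrite inE liftK.
Qed.

Lemma cons_set_bij n : bijective (fun p : bool * {set 'I_n} => cons_set p.1 p.2).
Proof.
exists (fun L : {set 'I_n.+1} => (ord0 \in L, [set i | lift ord0 i \in L])).
  move=> [b L] /=; rewrite inE unlift_none; congr pair.
  by apply/setP => i; rewrite !inE liftK.
move=> L; apply/setP => i; rewrite inE.
by case: unliftP => [j ->|->]; rewrite ?inE.
Qed.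

Variables (R : Type) (idx : R) (op : Monoid.com_law idx).

Lemma big_set_ord0 (F : seq bool -> R) :
  \big[op/idx]_(L : {set 'I_0}) F (mask_of_set L) = F [::].
Proof.
rewrite (big_pred1 set0) => [|L /=]; last by apply/esym/eqP/setP => -[].
by rewrite /mask_of_set enum_ord0.
Qed.

Lemma big_set_ordS n (F : seq bool -> R) :
  \big[op/idx]_(L : {set 'I_n.+1}) F (mask_of_set L)
  = \big[op/idx]_(L : {set 'I_n}) op (F (true :: mask_of_set L)) (F (false :: mask_of_set L)).
Proof.
rewrite (reindex _ (onW_bij _ (@cons_set_bij n))) /=.
rewrite -(pair_big xpredT xpredT (fun b L => F (mask_of_set (cons_set b L)))) /=.
rewrite big_bool -big_split /=.
by apply: eq_bigr => L _; rewrite !mask_of_cons_set.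
Qed.

Lemma big_set_nth (x0 : R) (s : seq R) (L : {set 'I_(size s)}) :
  \big[op/idx]_(i in L) nth x0 s i = \big[op/idx]_(y <- mask (mask_of_set L) s) y.
Proof. by rewrite -big_enum -(map_nth_enum_set x0) big_map. Qed.

End SetMasks.

Section ThetaShuffle.
Variables (k : comPzRingType) (A : comAlgType k).
Implicit Types (P Q : A -> A) (u v : seq A -> A) (x : A) (s : seq A).

Definition bracket x P : A -> A := fun y => P (x * y) - x * P y.

Let theta_term P s (m : seq bool) : A :=
  (-1) ^+ count id m * \prod_(y <- mask m s) y * P (\prod_(y <- mask (map negb m) s) y).

Let shuffle_term (i : nat) u v s (m : seq bool) : A :=
  if count id m == i then u (mask m s) * v (mask (map negb m) s) else 0.

Lemma theta_form_masks P s :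
  theta_form P s = \sum_(L : {set 'I_(size s)}) theta_term P s (mask_of_set L).
Proof.
apply: eq_bigr => L _; rewrite /theta_term card_mask_of_set -mask_of_setC.
by rewrite !big_set_nth.
Qed.

Lemma shuffle_masks i u v s :
  shuffle i u v s = \sum_(L : {set 'I_(size s)}) shuffle_term i u v s (mask_of_set L).
Proof.
rewrite /shuffle big_mkcond; apply: eq_bigr => L _.
by rewrite /shuffle_term card_mask_of_set map_nth_enum_set -mask_of_setC map_nth_enum_set.
Qed.

Lemma theta_form_nil P : theta_form P [::] = P 1.
Proof. by rewrite theta_form_masks big_set_ord0 /theta_term /= !big_nil expr0 !mul1r. Qed.

Lemma theta_form_cons P x s : theta_form P (x :: s) = theta_form (bracket x P) s.
Proof.
rewrite !theta_form_masks big_set_ordS; apply: eq_bigr => L _.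
rewrite /theta_term /bracket /= !big_cons exprS; ring.
Qed.

Lemma shuffle_nil i u v : shuffle i u v [::] = if i == 0 then u [::] * v [::] else 0.
Proof. by rewrite shuffle_masks big_set_ord0 /shuffle_term eq_sym. Qed.

Lemma shuffle_cons i u v x s :
  shuffle i u v (x :: s)
  = (if i is i'.+1 then shuffle i' (fun t => u (x :: t)) v s else 0)
    + shuffle i u (fun t => v (x :: t)) s.
Proof.
rewrite !shuffle_masks big_set_ordS big_split /=; congr (_ + _).
by case: i => [|i]; [rewrite big1 | rewrite shuffle_masks].
Qed.

Lemma eq_theta_form P Q s : P =1 Q -> theta_form P s = theta_form Q s.
Proof. by move=> eqPQ; apply: eq_bigr => L _; rewrite eqPQ. Qed.

Lemma theta_form_linear a P Q s :
  theta_form (fun y => a * P y + Q y) s = a * theta_form P s + theta_form Q s.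
Proof.
rewrite /theta_form mulr_sumr -big_split; apply: eq_bigr => L _ /=.
by rewrite mulrDr mulrCA.
Qed.

Lemma theta_formD P Q s :
  theta_form (fun y => P y + Q y) s = theta_form P s + theta_form Q s.
Proof.
rewrite -[theta_form P s]mul1r -theta_form_linear.
by apply: eq_theta_form => y; rewrite mul1r.
Qed.

Lemma theta_form0 s : theta_form (fun _ => 0) s = 0.
Proof. by apply: big1 => L _; rewrite mulr0. Qed.

Lemma eq_shuffle i u u' v v' s :
  u =1 u' -> v =1 v' -> shuffle i u v s = shuffle i u' v' s.
Proof. by move=> eq_u eq_v; apply: eq_bigr => L _; rewrite eq_u eq_v. Qed.

Lemma shuffle0r i u s : shuffle i u (fun _ => 0) s = 0.
Proof. by apply: big1 => L _; rewrite mulr0. Qed.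

Lemma klinB P : klin P -> forall y z, P (y - z) = P y - P z.
Proof. by move=> linP y z; rewrite addrC -scaleN1r linP scaleN1r addrC. Qed.

Lemma isDiff_klin n P : isDiff n P -> klin P.
Proof. by case: n => [|n] []. Qed.

Lemma bracket_comp P Q x y :
  klin P -> bracket x (fun z => P (Q z)) y = bracket x P (Q y) + P (bracket x Q y).
Proof. by move=> linP; rewrite /bracket klinB // [RHS]addrC addrA subrK. Qed.

Lemma isDiff0_bracket P x y : isDiff 0 P -> bracket x P y = 0.
Proof. by case=> _ [a Pa]; rewrite /bracket !Pa mulrCA subrr. Qed.

Lemma theta_form_comp s i j P Q :
  isDiff i P -> isDiff j Q -> size s = (i + j)%N ->
  theta_form (fun y => P (Q y)) s = shuffle i (theta_form P) (theta_form Q) s.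
Proof.
elim: s i j P Q => [|x s IHs] i j P Q DiP DjQ size_s.
  case: i j size_s DiP DjQ => [|//] [|//] _ [_ [a Pa]] [_ [b Qb]].
  by rewrite shuffle_nil /= !theta_form_nil !Pa !Qb !mulr1.
have linP := isDiff_klin DiP.
rewrite theta_form_cons (eq_theta_form _ (fun y => bracket_comp Q x y linP)).
rewrite theta_formD shuffle_cons; congr (_ + _).
  case: i DiP size_s => [|i] DiP size_s.
    by rewrite (eq_theta_form _ (fun y => isDiff0_bracket x (Q y) DiP)) theta_form0.
  rewrite (IHs i j _ Q (DiP.2 x) DjQ); last by case: size_s.
  by apply: eq_shuffle => t //; rewrite theta_form_cons.
case: j DjQ size_s => [|j] DjQ size_s.
  have P0 : P 0 = 0 by have := klinB linP 0 0; rewrite !subrr.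
  have PbracketQ0 y : P (bracket x Q y) = 0 by rewrite isDiff0_bracket.
  rewrite (eq_theta_form _ PbracketQ0) theta_form0 -(shuffle0r i (theta_form P) s).
  apply: eq_shuffle => // t.
  by rewrite theta_form_cons (eq_theta_form _ (isDiff0_bracket x ^~ DjQ)) theta_form0.
rewrite (IHs i j P _ DiP (DjQ.2 x)); last by move: size_s; rewrite addnS => -[].
by apply: eq_shuffle => t //; rewrite theta_form_cons.
Qed.

End ThetaShuffle.

Theorem mainTheorem6 (k : comPzRingType) (A : comAlgType k) :
  [/\ forall (n : nat) (P Q : A -> A) (a : A),
        isDiff n P -> isDiff n Q ->
        forall s : seq A, size s = n ->
          theta_form (fun x => a * P x + Q x) s
            = a * theta_form P s + theta_form Q s,
      forall (i j : nat) (P Q : A -> A),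
        isDiff i P -> isDiff j Q ->
        forall s : seq A, size s = (i + j)%N ->
          theta_form (fun x => P (Q x)) s
            = shuffle i (theta_form P) (theta_form Q) s
    & theta_form (fun x : A => x) [::] = 1].
Proof.
split=> [n P Q a _ _ s _ | i j P Q DiP DjQ s size_s | ].
- exact: theta_form_linear.
- exact: theta_form_comp DiP DjQ size_s.
- by rewrite theta_form_nil.
Qed.
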